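(* Let $n\ge1$, $\mathcal{X}$ the simplex in $\mathbb{R}^{n+1}$, $\theta$ a kernel, $\Phi$ a Lipschitz continuous smooth function on an open neighborhood of $\mathcal{X}$, and $\eta>0$. If $x(t)$ is a solution trajectory of the inertial dynamics (ID) in $\mathcal{X}^\circ$ that is defined for all $t\ge0$, then $\lim_{t\to\infty}\dot x(t)=0$.
   Context: $\mathcal{X}=\{x\in\mathbb{R}^{n+1}:x_\alpha\ge0,\sum_\alpha x_\alpha=1\}$ with relative interior $\mathcal{X}^\circ$. A kernel is a $C^\infty$ function $\theta:[0,\infty)\to\mathbb{R}\cup\{+\infty\}$ with $\theta(x)<\infty$ for $x>0$, $\lim_{x\to0^+}\theta'(x)=-\infty$, $\theta''>0$, $\theta'''<0$ on $(0,\infty)$. With $\theta''_\alpha=\theta''(x_\alpha)$, $\theta'''_\alpha=\theta'''(x_\alpha)$, $\Theta''=(\sum_\beta1/\theta''_\beta)^{-1}$, $v_\alpha=\partial\Phi/\partial x_\alpha$, the inertial dynamics (ID) on $\mathcal{X}^\circ$ are $$\ddot x_\alpha=\frac{1}{\theta''_\alpha}\Big[v_\alpha-\sum_{\beta}\frac{\Theta''}{\theta''_\beta}v_\beta\Big]-\frac{1}{2\theta''_\alpha}\Big[\theta'''_\alpha\dot x_\alpha^2-\sum_\beta\frac{\Theta''}{\theta''_\beta}\theta'''_\beta\dot x_\beta^2\Big]-\eta\dot x_\alpha.$$ *)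

From HB Require Import structures.
From mathcomp Require Import all_boot all_order all_algebra.
From mathcomp Require Import all_classical all_reals all_analysis.
Set Implicit Arguments. Unset Strict Implicit. Unset Printing Implicit Defensive.
Import Order.TTheory GRing.Theory Num.Theory.
Import numFieldNormedType.Exports.
Local Open Scope classical_set_scope.
Local Open Scope ring_scope.

Section Defs.
Variable R : realType.

Definition simplex (n : nat) : set 'rV[R]_n.+1 :=
  [set p | (forall a : 'I_n.+1, 0 <= p 0 a) /\ \sum_(a < n.+1) p 0 a = 1].

Definition simplex_relint (n : nat) : set 'rV[R]_n.+1 :=
  [set p | (forall a : 'I_n.+1, 0 < p 0 a) /\ \sum_(a < n.+1) p 0 a = 1].

(* A kernel, restricted to (0,oo) (the only part entering (ID)):
   C^oo on (0,oo), theta' -> -oo at 0+, theta'' > 0, theta''' < 0. *)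
Definition is_kernel (theta : R -> R) : Prop :=
  [/\ (forall (k : nat) (y : R), 0 < y -> derivable (derive1n k theta) y 1),
      derive1 theta y @[y --> 0^'+] --> -oo,
      (forall y : R, 0 < y -> 0 < derive1n 2 theta y) &
      (forall y : R, 0 < y -> derive1n 3 theta y < 0)].

Fixpoint iter_dir (V : normedModType R) (vs : seq V) (f : V -> R) : V -> R :=
  match vs with
  | [::] => f
  | v :: vs' => fun p => 'D_v (iter_dir vs' f) p
  end.

Definition smooth_on (V : normedModType R) (U : set V) (f : V -> R) : Prop :=
  (forall (vs : seq V) (v : V) (p : V), U p -> derivable (iter_dir vs f) p v) /\
  (forall (vs : seq V), {within U, continuous (iter_dir vs f)}).

Definition lipschitz_on_set (V : normedModType R) (U : set V) (f : V -> R) : Prop :=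
  exists L : R, forall p q : V, U p -> U q -> `|f p - f q| <= L * `|p - q|.

Definition partial (n : nat) (Phi : 'rV[R]_n.+1 -> R) (a : 'I_n.+1)
  (p : 'rV[R]_n.+1) : R := 'D_(delta_mx 0 a) Phi p.

Definition ID_rhs (n : nat) (theta : R -> R) (Phi : 'rV[R]_n.+1 -> R) (eta : R)
  (p q : 'rV[R]_n.+1) (a : 'I_n.+1) : R :=
  let th2 := fun b : 'I_n.+1 => derive1n 2 theta (p 0 b) in
  let th3 := fun b : 'I_n.+1 => derive1n 3 theta (p 0 b) in
  let Th2 := (\sum_(b < n.+1) (th2 b)^-1)^-1 in
  let v := fun b => partial Phi b p in
  (th2 a)^-1 * (v a - \sum_(b < n.+1) (Th2 / th2 b) * v b)
  - (2 * th2 a)^-1 * (th3 a * (q 0 a) ^+ 2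
                      - \sum_(b < n.+1) (Th2 / th2 b) * th3 b * (q 0 b) ^+ 2)
  - eta * q 0 a.

End Defs.

Arguments simplex {R} n.
Arguments simplex_relint {R} n.

(* Along a trajectory of (ID) the energy E = K - 2 Phi(x), with kinetic term
   K = sum_a theta''(x_a) xdot_a^2, satisfies E' = -2 eta K: the multiplier terms
   of (ID) cancel because sum_a xdot_a = 0.  Phi is Lipschitz, hence bounded on the
   simplex, so E is bounded below; being nonincreasing it converges and K stays
   bounded.  Then xdot is bounded, so K' is bounded above, and a nonnegative K with
   finite integral that cannot grow faster than linearly tends to 0.  Finally
   theta'' is decreasing, so K >= theta''(1) xdot_a^2 on the simplex. *)

From HB Require Import structures.
From mathcomp Require Import all_boot all_order all_algebra.
From mathcomp Require Import all_classical all_reals all_analysis.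
From mathcomp Require Import ring lra.
Import Order.TTheory GRing.Theory Num.Theory.
Import numFieldNormedType.Exports.
Local Open Scope classical_set_scope.
Local Open Scope ring_scope.

Section RealDerivatives.
Context {R : realType}.

Lemma is_derive_row_coord m (y : R -> 'rV[R]_m) t (a : 'I_m) :
  derivable y t 1 -> is_derive t 1 (fun s => y s 0 a) (derive1 y t 0 a).
Proof.
move=> dy; have da := (derivable_mxP y t 1).1 dy 0 a.
by apply: DeriveDef => //; rewrite derive1E derive_mx // mxE.
Qed.

Lemma is_derive1nS (f : R -> R) k y :
  derivable (derive1n k f) y 1 -> is_derive y 1 (derive1n k f) (derive1n k.+1 f y).
Proof. by move=> dfy; apply: DeriveDef => //; rewrite derive1nS derive1E. Qed.

Lemma MVT_le (f df : R -> R) (a b C : R) : a <= b ->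
  (forall s : R, a <= s <= b -> is_derive s 1 f (df s)) ->
  (forall s, a <= s <= b -> df s <= C) -> f b - f a <= C * (b - a).
Proof.
move=> ab fdf dfC.
have cf : {within `[a, b], continuous f}.
  by apply: derivable_within_continuous => s; rewrite in_itv /= => /fdf [].
have [c] := MVT_segment ab (fun s sab => fdf s (subset_itv_oo_cc sab)) cf.
rewrite in_itv /= => cab ->; apply: ler_wpM2r; first by rewrite subr_ge0.
exact: dfC.
Qed.

Lemma MVT_centered (g dg : R -> R) (h : R) :
  (forall s : R, `|s| <= `|h| -> is_derive s 1 g (dg s)) ->
  exists2 c, `|c| <= `|h| & g h - g 0 = dg c * h.
Proof.
move=> gdg.
have MVT_in a b : a <= b -> (forall s, a <= s <= b -> `|s| <= `|h|) ->
    exists2 c, `|c| <= `|h| & g b - g a = dg c * (b - a).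
  move=> ab abh.
  have cg : {within `[a, b], continuous g}.
    by apply: derivable_within_continuous => s; rewrite in_itv /= => /abh /gdg [].
  have gdg' (s : R) : s \in `]a, b[%R -> is_derive s 1 g (dg s).
    by move=> /subset_itv_oo_cc; rewrite in_itv /= => /abh /gdg.
  have [c] := MVT_segment ab gdg' cg.
  by rewrite in_itv /= => /abh ch ->; exists c.
have [h0|h0] := leP 0 h.
  have [|c ch ->] := MVT_in 0 h h0; last by exists c; rewrite ?subr0.
  by move=> s /andP[s0 sh]; rewrite !ger0_norm // (le_trans s0 sh).
have [|c ch E] := MVT_in h 0 (ltW h0).
  by move=> s /andP[hs s0]; rewrite !ler0_norm ?lerN2 // ?(ltW h0) // (le_trans hs s0).
by exists c => //; rewrite -opprB E sub0r mulrN opprK.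
Qed.

End RealDerivatives.

Section DirectionalDerivatives.
Context {R : realType} {V : normedModType R}.
Implicit Types (f : V -> R) (p q u v w : V).

Lemma derive_line f w p :
  'D_w f p = derive1 (fun r : R => f (r *: w + p)) 0.
Proof.
rewrite derive1E /derive; do 2 f_equal; apply/funext => h /=.
by rewrite addr0 scale0r add0r [h *: (1:R)]mulr1.
Qed.

Lemma is_derive_line f v q (s : R) : derivable f (s *: v + q) v ->
  is_derive s 1 (fun r : R => f (r *: v + q)) ('D_v f (s *: v + q)).
Proof.
move=> dfv.
have quotE : (fun h : R => h^-1 *: (((fun r : R => f (r *: v + q)) \o shift s) (h *: 1)
   - f (s *: v + q))) =
  (fun h : R => h^-1 *: ((f \o shift (s *: v + q)) (h *: v) - f (s *: v + q))).
  by apply/funext => h /=; rewrite [h *: (1:R)]mulr1 scalerDl addrA.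
by apply: DeriveDef; [rewrite /derivable quotE | rewrite /derive quotE].
Qed.

Lemma derive_dirZ f (c : R) u p : derivable f p u ->
  'D_(c *: u) f p = c * 'D_u f p.
Proof.
move=> dfu.
have dg : is_derive (0 * c) 1 (fun r : R => f (r *: u + p)) ('D_u f p).
  rewrite mul0r; apply: DeriveDef; first exact: (derivable1P f p u).1.
  by rewrite -derive1E -derive_line.
have dm : is_derive (0 : R) 1 (fun r : R => r * c) c.
  by apply: is_derive_eq; rewrite scaler0 add0r [c%:A]mulr1.
rewrite derive_line derive1E.
have -> : (fun r : R => f (r *: (c *: u) + p)) =
   (fun r : R => f (r *: u + p)) \o (fun r => r * c).
  by apply/funext => r /=; rewrite scalerA.
have fcu := is_derive1_comp (g := fun r : R => r * c) dg dm.
by rewrite derive_val mulrC.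
Qed.

(* Mean value theorem along v: this is what makes 'D_w f p additive in w without
   differentiability of f. *)
Lemma cvg_quotient_shifted {f} {U : set V} u {v p} : open U -> U p ->
  (forall q, U q -> derivable f q v) -> {for p, continuous ('D_v f)} ->
  (fun h : R => h^-1 *: (f (h *: v + (h *: u + p)) - f (h *: u + p)))
    @ 0^' --> 'D_v f p.
Proof.
move=> oU Up dfv cDv; apply/cvgrPdist_lt => e e0.
have : \forall q \near p, U q /\ `|'D_v f p - 'D_v f q| < e.
  near=> q; split; first by near: q; apply: open_nbhs_nbhs.
  by near: q; move/cvgrPdist_lt: cDv; apply.
move/nbhs_normP => [d /= d0 ball_d].
have k0 : 0 < `|u| + `|v| + 1 by rewrite ltr_pwDr // addr_ge0.
near=> h.
have hk : `|h| * (`|u| + `|v| + 1) < d.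
  rewrite -ltr_pdivlMr //; near: h; apply: dnbhs0_lt; exact: divr_gt0.
have near_p (s : R) : `|s| <= `|h| -> `|p - (s *: v + (h *: u + p))| < d.
  move=> sh; apply: le_lt_trans hk.
  rewrite addrA opprD addrCA subrr addr0 normrN (le_trans (ler_normD _ _)) //.
  rewrite !normrZ; have := normr_ge0 u; have := normr_ge0 v; have := normr_ge0 s.
  nra.
have [c ch] := @MVT_centered R (fun r => f (r *: v + (h *: u + p))) _ h
  (fun s sh => is_derive_line _ _ _ _ (dfv _ (ball_d _ (near_p s sh)).1)).
rewrite scale0r add0r => ->.
have hn0 : h != 0 by near: h; exact: nbhs_dnbhs_neq.
rewrite -[_ *: _]/(h^-1 * _) mulrCA mulVf // mulr1.
exact: (ball_d _ (near_p c ch)).2.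
Unshelve. all: by end_near. Qed.

Lemma deriveD_dir {f} {U : set V} {u v p} : open U -> U p ->
  (forall q w, U q -> derivable f q w) -> {within U, continuous ('D_v f)} ->
  'D_(u + v) f p = 'D_u f p + 'D_v f p.
Proof.
move=> oU Up df cDv.
have cDvp : {for p, continuous ('D_v f)}.
  by move: cDv; rewrite continuous_open_subspace // => /(_ p (mem_set Up)).
have dfu : (fun h : R => h^-1 *: ((f \o shift p) (h *: u) - f p)) @ 0^'
    --> 'D_u f p := df p u Up.
apply: cvg_lim => //.
have -> : (fun h : R => h^-1 *: ((f \o shift p) (h *: (u + v)) - f p)) =
    (fun h : R => h^-1 *: ((f \o shift p) (h *: u) - f p) +
                  h^-1 *: (f (h *: v + (h *: u + p)) - f (h *: u + p))).
  apply/funext => h /=; rewrite -scalerDr.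
  have -> : h *: (u + v) + p = h *: v + (h *: u + p).
    by rewrite scalerDr -addrA addrCA.
  by congr (_ *: _); lra.
exact: cvgD dfu (cvg_quotient_shifted u oU Up (fun q Uq => df q v Uq) cDvp).
Qed.

Lemma lipschitz_quotient {f} {U : set V} {L : R} (h : R) {p q} :
  (forall p q, U p -> U q -> `|f p - f q| <= L * `|p - q|) -> U p -> U q ->
  `|h^-1 *: (f p - f q)| <= `|L| * `|h^-1 *: (p - q)|.
Proof.
move=> fL Up Uq; rewrite !normrZ mulrCA ler_wpM2l //.
by rewrite (le_trans (fL _ _ Up Uq)) // ler_wpM2r // ler_norm.
Qed.

Lemma near_line_in_open (U : set V) w p : open U -> U p ->
  \forall h \near (0 : R)^', U (h *: w + p).
Proof.
move=> oU Up.
have /nbhs_normP[r /= r0 ball_r] : \forall q \near p, U q.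
  by apply: open_nbhs_nbhs.
have w1 : 0 < `|w| + 1 by rewrite ltr_pwDr.
near=> h; apply: ball_r => /=.
rewrite opprD addrCA subrr addr0 normrN normrZ.
rewrite (@le_lt_trans _ _ (`|h| * (`|w| + 1))) ?ler_wpM2l ?lerDl //.
by rewrite -ltr_pdivlMr //; near: h; apply: dnbhs0_lt; exact: divr_gt0.
Unshelve. all: by end_near. Qed.

Lemma normr_derive_le_lipschitz {f} {U : set V} {L : R} {v p} : open U -> U p ->
  (forall p q, U p -> U q -> `|f p - f q| <= L * `|p - q|) ->
  derivable f p v -> `|'D_v f p| <= `|L| * `|v|.
Proof.
move=> oU Up fL dfv.
apply: (cvgr_to_le (cvg_norm dfv)); near=> h.
have hn0 : h != 0 by near: h; exact: nbhs_dnbhs_neq.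
have Uh : U (h *: v + p) by near: h; exact: near_line_in_open.
by rewrite /= (le_trans (lipschitz_quotient h fL Uh Up)) // addrK scalerA mulVf ?scale1r.
Unshelve. all: by end_near. Qed.

Lemma near_derivable_in_open {U : set V} {x : R -> V} {t} : open U -> U (x t) ->
  derivable x t 1 -> \forall h \near (0 : R)^', U (x (h *: 1 + t)).
Proof.
move=> oU Uxt dx.
have /nbhs_normP[r /= r0 ball_r] : \forall s \near t, U (x s).
  have /derivable1_diffP/differentiable_continuous cx := dx.
  by apply: cx; apply: open_nbhs_nbhs.
near=> h; apply: ball_r => /=; rewrite [h%:A]mulr1 opprD addrCA subrr addr0 normrN.
by near: h; exact: dnbhs0_lt.
Unshelve. all: by end_near. Qed.

Lemma is_derive_comp_lipschitz {f} {U : set V} {L : R} {x : R -> V} {t} :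
  open U -> U (x t) ->
  (forall p q, U p -> U q -> `|f p - f q| <= L * `|p - q|) ->
  derivable x t 1 -> derivable f (x t) ('D_1 x t) ->
  is_derive t 1 (f \o x) ('D_('D_1 x t) f (x t)).
Proof.
move=> oU Uxt fL dx df.
set p := x t; set w := 'D_1 x t.
have qx : (fun h : R => h^-1 *: (x (h *: 1 + t) - p)) @ 0^' --> w := dx.
have qf : (fun h : R => h^-1 *: (f (h *: w + p) - f p)) @ 0^' --> 'D_w f p := df.
have err : (fun h : R => h^-1 *: (f (x (h *: 1 + t)) - f (h *: w + p))) @ 0^' --> 0.
  apply/cvgr0Pnorm_lt => e e0.
  have eL : 0 < e / (`|L| + 1) by rewrite divr_gt0 // ltr_pwDr.
  move/cvgrPdist_lt: qx => /(_ _ eL) qx_e.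
  near=> h.
  have hn0 : h != 0 by near: h; exact: nbhs_dnbhs_neq.
  have Uy : U (x (h *: 1 + t)) by near: h; exact: near_derivable_in_open oU Uxt dx.
  have Uz : U (h *: w + p) by near: h; exact: near_line_in_open.
  apply: le_lt_trans (lipschitz_quotient h fL Uy Uz) _.
  have -> : h^-1 *: (x (h *: 1 + t) - (h *: w + p)) = - (w - h^-1 *: (x (h *: 1 + t) - p)).
    by rewrite opprB [h *: w + p]addrC opprD addrA scalerBr scalerA mulVf // scale1r.
  have qh : `|w - h^-1 *: (x (h *: 1 + t) - p)| < e / (`|L| + 1).
    by near: h; exact: qx_e.
  have : e / (`|L| + 1) * (`|L| + 1) = e by rewrite divfK // gt_eqF // ltr_pwDr.
  move: qh (normr_ge0 L) eL; rewrite normrN.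
  set a := `|_ - _|; set d := e / _; have := normr_ge0 (w - h^-1 *: (x (h *: 1 + t) - p)).
  rewrite -/a; nra.
have q : (fun h : R => h^-1 *: (f (x (h *: 1 + t)) - f p)) @ 0^' --> 'D_w f p.
  rewrite -[X in _ --> X]addr0.
  have -> : (fun h : R => h^-1 *: (f (x (h *: 1 + t)) - f p)) =
      (fun h : R => h^-1 *: (f (h *: w + p) - f p) +
                    h^-1 *: (f (x (h *: 1 + t)) - f (h *: w + p))).
    by apply/funext => h; rewrite -scalerDr; congr (_ *: _); lra.
  exact: cvgD qf err.
by apply: DeriveDef; [apply/cvg_ex; exists ('D_w f p) | exact: cvg_lim].
Unshelve. all: by end_near. Qed.

End DirectionalDerivatives.

Lemma derive_row_partials {R : realType} {m} {f : 'rV[R]_m -> R} {U : set 'rV[R]_m} w {p} :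
  open U -> U p -> (forall q v, U q -> derivable f q v) ->
  (forall v, {within U, continuous ('D_v f)}) ->
  'D_w f p = \sum_(a < m) w 0 a * 'D_(delta_mx 0 a) f p.
Proof.
move=> oU Up df cDf; rewrite {1}(row_sum_delta w).
apply: (big_ind2 (fun (u : 'rV_m) (d : R) => 'D_u f p = d)).
- exact: derive0.
- by move=> u1 d1 u2 d2 <- <-; exact: deriveD_dir oU Up df (cDf u2).
- by move=> a _; exact: derive_dirZ (df _ _ Up).
Qed.

Lemma rV_normr_le {R : realType} {m} {y : 'rV[R]_m} {b : R} : 0 <= b ->
  (forall a, `|y 0 a| <= b) -> `|y| <= b.
Proof.
move=> b0 yb; rewrite [leLHS]/Num.Def.normr /= mx_normrE.
by apply: (bigmax_le _ b0) => -[i a] _ /=; rewrite (ord1 i).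
Qed.

Lemma cvg_rV0_sq_le {R : realType} {T} {F : set_system T} {FF : Filter F} {m}
    {y : T -> 'rV[R]_m} (g : T -> R) :
  (\forall t \near F, forall a, y t 0 a ^+ 2 <= g t) -> g t @[t --> F] --> 0 ->
  y t @[t --> F] --> (0 : 'rV[R]_m).
Proof.
move=> yg g0; apply/cvgrPdist_le => e e0.
have e20 : 0 < e ^+ 2 by rewrite exprn_gt0.
near=> t; rewrite sub0r normrN; apply: rV_normr_le => [|a]; first exact: ltW.
have ge : `|g t| <= e ^+ 2 by near: t; exact: cvgr0_norm_le.
have ya : y t 0 a ^+ 2 <= g t by move: a; near: t.
have := real_normK (num_real (y t 0 a)); have := normr_ge0 (y t 0 a).
move: ge ya (ler_norm (g t)); set z := y t 0 a; nra.
Unshelve. all: by end_near. Qed.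

Section Dissipation.
Context {R : realType} {E K : R -> R} {t0 k C m : R}.
Hypotheses (k0 : 0 < k) (C0 : 0 < C).
Hypothesis dE : forall s, t0 <= s -> is_derive s 1 E (- (k * K s)).
Hypothesis K_ge0 : forall s, t0 <= s -> 0 <= K s.
Hypothesis E_lb : forall s, t0 <= s -> m <= E s.
Hypothesis K_slope : forall s s', t0 <= s -> s <= s' -> K s' - K s <= C * (s' - s).

Lemma dissipation_nonincreasing s s' : t0 <= s -> s <= s' -> E s' <= E s.
Proof.
move=> t0s ss'; rewrite -subr_le0 -(mul0r (s' - s)).
apply: MVT_le => // r /andP[sr _]; first exact: dE (le_trans t0s sr).
by rewrite oppr_le0 mulr_ge0 ?(ltW k0) ?K_ge0 // (le_trans t0s sr).
Qed.

Lemma dissipation_cvg : exists l : R, E s @[s --> +oo] --> l.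
Proof.
pose f r := - E (Num.max r t0).
have t0_max r : t0 <= Num.max r t0 by rewrite le_max lexx orbT.
have f_ndecr : nondecreasing_fun f.
  by move=> r r' rr'; rewrite lerN2 dissipation_nonincreasing // le_max2 ?lexx.
have f_ub : has_ubound (range f).
  by exists (- m) => _ [r _ <-]; rewrite lerN2 E_lb.
have /cvgN fcvg := nondecreasing_cvgr f_ndecr f_ub.
exists (- sup (range f)); apply: cvg_trans fcvg.
apply: near_eq_cvg; near=> r; rewrite /= /f opprK max_l //.
Unshelve. all: by end_near. Qed.

Lemma dissipation_cvg0 : K s @[s --> +oo] --> 0.
Proof.
have [l El] := dissipation_cvg.
apply/cvgrPdist_le => e e0.
pose h := e / (2 * C).
have h0 : 0 < h by rewrite divr_gt0 // mulr_gt0.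
have Ch : C * h = e / 2.
  by rewrite /h; field; rewrite gt_eqF.
have kd : 0 < k * e * h / 4.
  by rewrite divr_gt0 // mulr_gt0 // mulr_gt0.
move/cvgrPdist_lt: El => /(_ _ kd) /= [M [_ El]].
near=> s.
have t0s : t0 <= s by near: s; apply: nbhs_pinfty_ge; rewrite num_real.
rewrite sub0r normrN ger0_norm ?K_ge0 // leNgt; apply/negP => Ks.
(* Then K >= e/2 on [s - h, s], so E drops there by k e h / 2 > 2 (k e h / 4). *)
have t0sh : t0 <= s - h.
  by rewrite lerBrDr; near: s; apply: nbhs_pinfty_ge; rewrite num_real.
have Msh : M < s - h.
  by rewrite ltrBrDr; near: s; apply: nbhs_pinfty_gt; rewrite num_real.
have K_lb r : s - h <= r <= s -> e / 2 <= K r.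
  move=> /andP[hr rs]; have := K_slope _ _ (le_trans t0sh hr) rs.
  have : C * (s - r) <= C * h by rewrite ler_wpM2l ?(ltW C0) // lerBlDr addrC -lerBlDr.
  by rewrite Ch; lra.
have drop : E s - E (s - h) <= - (k * (e / 2)) * (s - (s - h)).
  apply: MVT_le; first by rewrite gerBl ltW.
    by move=> r /andP[hr _]; exact: dE (le_trans t0sh hr).
  by move=> r hr; rewrite lerN2 ler_wpM2l ?(ltW k0) ?K_lb.
have close := El _ Msh; have close' : `|l - E s| < k * e * h / 4.
  by apply: El; rewrite (lt_le_trans Msh) // gerBl ltW.
rewrite opprB addrCA subrr addr0 in drop.
move: drop close close'; rewrite !ltr_norml.
have : 0 < k * e * h by rewrite mulr_gt0 // mulr_gt0.
lra.
Unshelve. all: by end_near. Qed.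

End Dissipation.

Lemma kernel_derive2_nonincreasing (R : realType) (theta : R -> R) (y z : R) :
  is_kernel theta -> 0 < y -> y <= z ->
  derive1n 2 theta z <= derive1n 2 theta y.
Proof.
case=> dtheta _ _ theta3_lt0 y0 yz; rewrite -subr_le0 -(mul0r (z - y)).
apply: MVT_le => // r /andP[yr _]; have r0 := lt_le_trans y0 yr.
  exact/is_derive1nS/dtheta.
exact/ltW/theta3_lt0.
Qed.

Lemma inertial_power_balance (R : numFieldType) (T2 T3 v q acc S3 Sv eta : R) :
  T2 != 0 ->
  acc = T2^-1 * (v - Sv) - (2 * T2)^-1 * (T3 * q ^+ 2 - S3) - eta * q ->
  T2 * (2 * q * acc) + q ^+ 2 * (T3 * q) =
  2 * (v * q) - 2 * eta * (T2 * q ^+ 2) + q * (S3 - 2 * Sv).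
Proof. by move=> T2n0 ->; field. Qed.

Section InertialTrajectory.
Context {R : realType} {n : nat} {theta : R -> R} {Phi : 'rV[R]_n.+1 -> R}.
Context {U : set 'rV[R]_n.+1} {eta L : R} {x : R -> 'rV[R]_n.+1}.
Hypotheses (theta_kernel : is_kernel theta) (oU : open U) (simplexU : simplex n `<=` U).
Hypothesis dPhi : forall p v, U p -> derivable Phi p v.
Hypothesis cPhi : forall v, {within U, continuous ('D_v Phi)}.
Hypothesis PhiL : forall p q, U p -> U q -> `|Phi p - Phi q| <= L * `|p - q|.
Hypothesis eta0 : 0 < eta.
Hypothesis x_ID : forall t, 0 < t ->
  [/\ simplex_relint n (x t), derivable x t 1, derivable (derive1 x) t 1 &
      forall a, derive1 (derive1 x) t 0 a = ID_rhs theta Phi eta (x t) (derive1 x t) a].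

Local Notation th2 := (derive1n 2 theta).
Local Notation th3 := (derive1n 3 theta).
Local Notation xd := (derive1 x).
Local Notation xdd := (derive1 (derive1 x)).

Definition kinetic t := \sum_(a < n.+1) th2 (x t 0 a) * xd t 0 a ^+ 2.

Definition energy t := kinetic t - 2 * Phi (x t).

Definition kinetic_rate t := \sum_(a < n.+1)
  (th2 (x t 0 a) * (2 * xd t 0 a * xdd t 0 a) + xd t 0 a ^+ 2 * (th3 (x t 0 a) * xd t 0 a)).

Lemma trajectory_coord_gt0 {t : R} a : 0 < t -> 0 < x t 0 a.
Proof. by move=> /x_ID[[x_gt0 _] _ _ _]; exact: x_gt0. Qed.

Lemma trajectory_coord_le1 {t : R} a : 0 < t -> x t 0 a <= 1.
Proof.
move=> /x_ID[[x_gt0 <-] _ _ _]; rewrite (bigD1 a) //= lerDl.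
by apply: sumr_ge0 => b _; exact/ltW.
Qed.

Lemma kinetic_weight_gt0 {t : R} a : 0 < t -> 0 < th2 (x t 0 a).
Proof.
by case: theta_kernel => _ _ th2_gt0 _ t0; apply/th2_gt0/trajectory_coord_gt0.
Qed.

Lemma trajectory_in_U {t : R} : 0 < t -> U (x t).
Proof.
move=> t0; apply: simplexU; have [[x_gt0 x_sum] _ _ _] := x_ID _ t0.
by split=> // a; exact/ltW.
Qed.

Lemma sum_velocity_eq0 {t : R} : 0 < t -> \sum_(a < n.+1) xd t 0 a = 0.
Proof.
move=> t0; have [_ dx _ _] := x_ID _ t0.
have dsum : is_derive t 1 (\sum_(a < n.+1) (fun r => x r 0 a))
    (\sum_(a < n.+1) xd t 0 a).
  by apply: is_derive_sum => a; exact: is_derive_row_coord.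
have dsum0 : is_derive t 1 (\sum_(a < n.+1) (fun r => x r 0 a)) 0.
  apply: (@near_eq_is_derive _ _ _ (cst (1 : R))); near=> r.
  have r0 : 0 < r by near: r; exact: lt_nbhsr.
  by have [[_ x_sum] _ _ _] := x_ID _ r0; rewrite fct_sumE.
by move: dsum dsum0 => [_ <-] [_ ->].
Unshelve. all: by end_near. Qed.

Lemma is_derive_kinetic {t : R} : 0 < t -> is_derive t 1 kinetic (kinetic_rate t).
Proof.
move=> t0; have [_ dx dxd _] := x_ID _ t0.
rewrite /kinetic -fct_sumE; apply: is_derive_sum => a.
have dth2 : is_derive t 1 (th2 \o (fun r => x r 0 a)) (th3 (x t 0 a) * xd t 0 a).
  apply: is_derive1_comp; last exact: is_derive_row_coord.
  case: theta_kernel => dtheta _ _ _.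
  exact/is_derive1nS/dtheta/trajectory_coord_gt0.
have dsq : is_derive t 1 ((fun r => xd r 0 a) ^+ 2)
    ((2%:R * xd t 0 a ^+ 1) *: xdd t 0 a).
  by apply: is_deriveX; exact: is_derive_row_coord.
apply: is_derive_eq (is_deriveM dth2 dsq) _.
by rewrite /= expr1; congr (_ * _ + _ * _).
Qed.

Lemma is_derive_potential {t : R} : 0 < t ->
  is_derive t 1 (Phi \o x) ('D_(xd t) Phi (x t)).
Proof.
move=> t0; have [_ dx _ _] := x_ID _ t0; have Ux := trajectory_in_U t0.
by rewrite derive1E; exact: is_derive_comp_lipschitz oU Ux PhiL dx (dPhi _ _ Ux).
Qed.

Lemma kinetic_rate_balance {t : R} : 0 < t ->
  kinetic_rate t = 2 * 'D_(xd t) Phi (x t) - 2 * eta * kinetic t.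
Proof.
move=> t0; have [_ _ _ xdd_ID] := x_ID _ t0.
(* Summed over a, the multiplier terms Sv and S3 get the factor sum_a xd_a = 0. *)
rewrite (derive_row_partials _ oU (trajectory_in_U t0) dPhi cPhi).
set Th := (\sum_(b < n.+1) (th2 (x t 0 b))^-1)^-1.
set Sv := \sum_(b < n.+1) Th / th2 (x t 0 b) * partial Phi b (x t).
set S3 := \sum_(b < n.+1) Th / th2 (x t 0 b) * th3 (x t 0 b) * xd t 0 b ^+ 2.
rewrite /kinetic_rate (eq_bigr (fun a => 2 * (partial Phi a (x t) * xd t 0 a)
    - 2 * eta * (th2 (x t 0 a) * xd t 0 a ^+ 2) + xd t 0 a * (S3 - 2 * Sv))).
  rewrite !big_split /= sumrN -!mulr_sumr -mulr_suml sum_velocity_eq0 // mul0r addr0.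
  by congr (2 * _ - _); apply: eq_bigr => a _; rewrite mulrC.
move=> a _; apply: inertial_power_balance; last exact: xdd_ID.
by rewrite gt_eqF // kinetic_weight_gt0.
Qed.

Lemma is_derive_energy {t : R} : 0 < t ->
  is_derive t 1 energy (- (2 * eta * kinetic t)).
Proof.
move=> t0; rewrite (_ : energy = kinetic - 2 \*: (Phi \o x)) //.
have dP := is_deriveZ 2 (is_derive_potential t0).
apply: is_derive_eq (is_deriveB (is_derive_kinetic t0) dP) _.
by rewrite kinetic_rate_balance // -[2 *: _]/(2 * _) addrAC subrr add0r.
Qed.

Lemma kinetic_ge0 {t : R} : 0 < t -> 0 <= kinetic t.
Proof.
by move=> t0; apply: sumr_ge0 => a _; rewrite mulr_ge0 ?sqr_ge0 ?ltW ?kinetic_weight_gt0.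
Qed.

Lemma kinetic_ge_coord {t : R} a : 0 < t -> th2 1 * xd t 0 a ^+ 2 <= kinetic t.
Proof.
move=> t0; apply: le_trans (_ : th2 (x t 0 a) * xd t 0 a ^+ 2 <= _).
  rewrite ler_wpM2r ?sqr_ge0 // kernel_derive2_nonincreasing //.
    exact: trajectory_coord_gt0.
  exact: trajectory_coord_le1.
rewrite /kinetic (bigD1 a) //= lerDl; apply: sumr_ge0 => b _.
by rewrite mulr_ge0 ?sqr_ge0 ?ltW ?kinetic_weight_gt0.
Qed.

Lemma potential_oscillation {t : R} : 0 < t -> `|Phi (x t) - Phi (x 1)| <= `|L|.
Proof.
move=> t0; have Ux1 := trajectory_in_U ltr01.
apply: le_trans (PhiL _ _ (trajectory_in_U t0) Ux1) _.
have dx1 : `|x t - x 1| <= 1.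
  apply: rV_normr_le => // a; rewrite !mxE ler_norml.
  have := trajectory_coord_gt0 a t0; have := trajectory_coord_le1 a t0.
  have := trajectory_coord_gt0 a ltr01; have := trajectory_coord_le1 a ltr01.
  lra.
apply: le_trans (ler_wpM2r (normr_ge0 _) (ler_norm L)) _.
by rewrite -[leRHS]mulr1 ler_wpM2l.
Qed.

Definition energy_floor := - (2 * (Phi (x 1) + `|L|)).

Lemma energy_ge_floor {t : R} : 0 < t -> energy_floor <= energy t.
Proof.
move=> t0; have := kinetic_ge0 t0; have := potential_oscillation t0.
rewrite /energy_floor /energy ler_norml; lra.
Qed.

Definition kinetic_bound := energy 1 - energy_floor.

Lemma kinetic_le_bound {t : R} : 1 <= t -> kinetic t <= kinetic_bound.
Proof.
move=> t1; have t0 := lt_le_trans ltr01 t1.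
have dE (s : R) : 1 <= s -> is_derive s 1 energy (- (2 * eta * kinetic s)).
  by move=> s1; exact/is_derive_energy/(lt_le_trans ltr01 s1).
have K0 (s : R) : 1 <= s -> 0 <= kinetic s.
  by move=> s1; exact/kinetic_ge0/(lt_le_trans ltr01 s1).
have k0 : 0 < 2 * eta by rewrite mulr_gt0.
have := dissipation_nonincreasing k0 dE K0 _ _ (lexx 1) t1.
have := potential_oscillation t0.
rewrite /kinetic_bound /energy_floor /energy ler_norml; lra.
Qed.

Lemma kinetic_weight1_gt0 : 0 < th2 1.
Proof. by case: theta_kernel => _ _ th2_gt0 _; exact: th2_gt0. Qed.

Definition velocity_bound := 1 + kinetic_bound / th2 1.

Lemma velocity_le_bound {t : R} : 1 <= t -> `|xd t| <= velocity_bound.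
Proof.
move=> t1; have t0 := lt_le_trans ltr01 t1.
have c0 := kinetic_weight1_gt0.
apply: rV_normr_le => [|a].
  rewrite addr_ge0 // divr_ge0 ?(ltW c0) //.
  exact: le_trans (kinetic_ge0 t0) (kinetic_le_bound t1).
have : xd t 0 a ^+ 2 <= kinetic_bound / th2 1.
  rewrite ler_pdivlMr // mulrC.
  exact: le_trans (kinetic_ge_coord a t0) (kinetic_le_bound t1).
have := real_normK (num_real (xd t 0 a)); have := normr_ge0 (xd t 0 a).
rewrite /velocity_bound; set y := xd t 0 a; nra.
Qed.

Definition kinetic_slope_bound := 2 * (`|L| * velocity_bound) + 1.

Lemma kinetic_rate_le {t : R} : 1 <= t -> kinetic_rate t <= kinetic_slope_bound.
Proof.
move=> t1; have t0 := lt_le_trans ltr01 t1.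
have DPhi : 'D_(xd t) Phi (x t) <= `|L| * velocity_bound.
  have Ux := trajectory_in_U t0; apply: le_trans (ler_norm _) _.
  apply: le_trans (ler_wpM2l (normr_ge0 L) (velocity_le_bound t1)).
  exact: normr_derive_le_lipschitz oU Ux PhiL (dPhi _ _ Ux).
have := kinetic_ge0 t0; have : 0 < 2 * eta by rewrite mulr_gt0.
rewrite kinetic_rate_balance // /kinetic_slope_bound; nra.
Qed.

Lemma velocity_cvg0 : xd t @[t --> +oo] --> 0.
Proof.
have k0 : 0 < 2 * eta by rewrite mulr_gt0.
have C0 : 0 < kinetic_slope_bound.
  rewrite ltr_pwDr // !mulr_ge0 //.
  exact: le_trans (normr_ge0 _) (velocity_le_bound (lexx 1)).
have dE (s : R) : 1 <= s -> is_derive s 1 energy (- (2 * eta * kinetic s)).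
  by move=> s1; exact/is_derive_energy/(lt_le_trans ltr01 s1).
have K0 (s : R) : 1 <= s -> 0 <= kinetic s.
  by move=> s1; exact/kinetic_ge0/(lt_le_trans ltr01 s1).
have Elb (s : R) : 1 <= s -> energy_floor <= energy s.
  by move=> s1; exact/energy_ge_floor/(lt_le_trans ltr01 s1).
have K_slope (s s' : R) : 1 <= s -> s <= s' ->
    kinetic s' - kinetic s <= kinetic_slope_bound * (s' - s).
  move=> s1 ss'; apply: MVT_le => // r /andP[sr _]; have r1 := le_trans s1 sr.
    exact/is_derive_kinetic/(lt_le_trans ltr01 r1).
  exact: kinetic_rate_le.
have c0 := kinetic_weight1_gt0.
apply: (cvg_rV0_sq_le (fun t => (th2 1)^-1 * kinetic t)).
  near=> t => a; rewrite ler_pdivlMl //.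
  by apply: kinetic_ge_coord; near: t; apply: nbhs_pinfty_gt; rewrite num_real.
rewrite -(mulr0 (th2 1)^-1).
exact: cvgM (cvg_cst _) (dissipation_cvg0 k0 C0 dE K0 Elb K_slope).
Unshelve. all: by end_near. Qed.

End InertialTrajectory.

Theorem proposition3p2 (R : realType) (n : nat) (theta : R -> R)
  (Phi : 'rV[R]_n.+1 -> R) (U : set 'rV[R]_n.+1) (eta : R)
  (x : R -> 'rV[R]_n.+1) :
  (0 < n)%N ->
  is_kernel theta ->
  open U -> simplex n `<=` U ->
  smooth_on U Phi -> lipschitz_on_set U Phi ->
  0 < eta ->
  (forall t : R, 0 < t ->
     [/\ simplex_relint n (x t),
         derivable x t 1,
         derivable (derive1 x) t 1 &
         forall a : 'I_n.+1,
           derive1 (derive1 x) t 0 a = ID_rhs theta Phi eta (x t) (derive1 x t) a]) ->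
  derive1 x t @[t --> +oo] --> 0.
Proof.
move=> _ theta_kernel oU simplexU [dPhi cPhi] [L PhiL] eta0 x_ID.
exact: (velocity_cvg0 theta_kernel oU simplexU (fun p v => dPhi [::] v p)
  (fun v => cPhi [:: v]) PhiL eta0 x_ID).
Qed.
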